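(* Let $G=K_4$ and $\vec G=(V,E^+\cup E^-)$ as in the context. The all-ones vector $\mathbf 1\in\mathbb{Z}^{E^+\cup E^-}$ satisfies $\mathbf 1(\delta^+_{\vec G}(U))\ge3$ for all $\emptyset\neq U\subsetneq V$ (so it is a nowhere-zero $3$-SCD), but the arc set $E^+\cup E^-$ cannot be partitioned into $3$ strongly connected digraphs, i.e. there are no pairwise disjoint $F_1,F_2,F_3$ with $F_1\cup F_2\cup F_3=E^+\cup E^-$ and $\delta^+_{\vec G}(U)\cap F_i\neq\emptyset$ for all $i$ and all $\emptyset\neq U\subsetneq V$.
   Context: $K_4$ is the complete graph on 4 vertices. $\vec G=(V,E^+\cup E^-)$ is obtained from $G$ by replacing each edge $\{u,v\}$ by the two arcs $(u,v)$ and $(v,u)$; $\delta^+_{\vec G}(U)$ is the set of arcs leaving $U$, and $x(B)=\sum_{e\in B}x_e$. *)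

From mathcomp Require Import all_boot all_order all_algebra.
Set Implicit Arguments. Unset Strict Implicit. Unset Printing Implicit Defensive.

(* The bidirected digraph \vec G has one Arc
   (u,v) for every ordered pair of distinct vertices, i.e. E^+ \cup E^- is the
   set of 12 arcs below (each edge {u,v} yields (u,v) and (v,u)). *)
Notation V := (ordinal 4).
Definition Arc : finType := {a : V * V | a.1 != a.2}%type.

Definition delta_out (U : {set V}) : {set Arc} :=
  [set a : Arc | ((val a).1 \in U) && ((val a).2 \notin U)].

Definition xsum (x : Arc -> int) (B : {set Arc}) : int := (\sum_(e in B) x e)%R.

Definition proper_nonempty (U : {set V}) : bool := (U != set0) && (U != [set: V]).

From mathcomp Require Import all_boot all_order all_algebra.
From mathcomp Require Import zify.

Set Implicit Arguments.
Unset Strict Implicit.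
Unset Printing Implicit Defensive.

Import GRing.Theory Num.Theory.

(* Three pairwise arc-disjoint strongly connected spanning subdigraphs F1, F2,
   F3 of the bidirected K_4 cannot exist, whether or not they cover all arcs.
   Each F_i must leave every vertex, which has only three out-arcs, so each
   F_i has out-degree exactly one: it is the graph of a successor map s_i,
   and strong connectivity makes s_i a cyclic permutation of the 4 vertices.
   Disjointness says s_i v <> s_j v for every v, and on four points the only
   4-cycle disagreeing everywhere with s_1 is its inverse.  Hence
   s_2 = s_1^-1 = s_3, contradicting the disjointness of F2 and F3. *)

Lemma card_delta_out (U : {set V}) : #|delta_out U| = #|U| * #|~: U|.
Proof.
rewrite -cardsX -(card_imset _ val_inj); apply: eq_card => -[x y].
rewrite in_setX /= in_setC; apply/imsetP/andP => [[[[u w] uw]] | [xU yU]].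
  by rewrite inE => /andP[? ?] [-> ->].
have xy : x != y by apply: contraNneq yU => <-.
by exists (exist _ (x, y) xy); rewrite // inE xU.
Qed.

Lemma xsum_ones_delta_out (U : {set V}) :
  proper_nonempty U -> (3 <= xsum (fun _ => 1) (delta_out U))%R.
Proof.
case/andP=> U0 UT; rewrite /xsum sumr_const card_delta_out ler_nat.
have := cardsC U; rewrite card_ord.
have : 0 < #|U| by rewrite card_gt0.
have : 0 < #|~: U| by rewrite card_gt0 -setCT (inj_eq (@setC_inj _)).
nia.
Qed.

Lemma proper_nonempty_set1 (v : V) : proper_nonempty [set v].
Proof.
apply/andP; split; first by apply/set0Pn; exists v; rewrite inE.
by apply/eqP => v1; have := cards1 v; rewrite v1 cardsT card_ord.
Qed.

Lemma card_delta_out1 (v : V) : #|delta_out [set v]| = 3.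
Proof. by rewrite card_delta_out cards1 cardsC1 card_ord. Qed.

Lemma card_setI_disjoint3 (T : finType) (B F1 F2 F3 : {set T}) :
  [disjoint F1 & F2] -> [disjoint F1 & F3] -> [disjoint F2 & F3] -> #|B| = 3 ->
  B :&: F1 != set0 -> B :&: F2 != set0 -> B :&: F3 != set0 ->
  #|B :&: F1| = 1.
Proof.
move=> d12 d13 d23 B3; rewrite -!card_gt0.
have cardsU_disjoint (X Y : {set T}) : [disjoint X & Y] -> #|X :|: Y| = #|X| + #|Y|.
  by move/disjoint_setI0 => XY0; rewrite -cardsUI XY0 cards0 addn0.
have dI (X Y : {set T}) : [disjoint X & Y] -> [disjoint B :&: X & B :&: Y].
  by move=> dXY; apply: disjointWl (subsetIr _ _) (disjointWr (subsetIr _ _) dXY).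
have : #|B :&: F1 :|: B :&: F2 :|: B :&: F3| <= #|B|.
  by apply: subset_leq_card; rewrite !subUset !subsetIl.
rewrite !cardsU_disjoint ?dI //; first lia.
by rewrite -setIUr; apply: dI; rewrite -setI_eq0 setIUl !disjoint_setI0 ?setU0.
Qed.

Definition strongly_connected (F : {set Arc}) : Prop :=
  forall U : {set V}, proper_nonempty U -> delta_out U :&: F != set0.

(* On a finite type these are exactly the cyclic permutations of all of [T]. *)
Definition cyclic_map (T : finType) (s : T -> T) : Prop :=
  forall U : {set T}, U != set0 -> {in U, forall u, s u \in U} -> U = [set: T].

Section Successor.

Variable F : {set Arc}.

Definition succ (v : V) : V :=
  if [pick a in delta_out [set v] :&: F] is Some a then (val a).2 else v.

Hypothesis F_strong : strongly_connected F.
Hypothesis F_out1 : forall v, #|delta_out [set v] :&: F| = 1.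

Lemma succ_arc (a : Arc) : a \in F -> succ (val a).1 = (val a).2.
Proof.
move=> aF; have aB : a \in delta_out [set (val a).1] :&: F.
  by rewrite !inE eqxx aF eq_sym (valP a).
rewrite /succ; case: pickP => [b bB | /(_ a)]; last by rewrite aB.
have /eqP/cards1P[c Bc] := F_out1 (val a).1.
by move: aB bB; rewrite Bc !inE => /eqP-> /eqP->.
Qed.

Lemma out_arc (v : V) : exists2 a : Arc, a \in F & (val a).1 = v.
Proof.
case/set0Pn: (F_strong (proper_nonempty_set1 v)) => a.
by rewrite !inE => /andP[/andP[/eqP av _] aF]; exists a.
Qed.

Lemma succ_cyclic : cyclic_map succ.
Proof.
move=> U U0 Usucc; apply/eqP; apply: contraT => UT.
case/set0Pn: (F_strong (introT andP (conj U0 UT))) => a.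
rewrite !inE => /andP[/andP[a1U a2U] aF].
by rewrite -(succ_arc aF) Usucc in a2U.
Qed.

End Successor.

Lemma succ_disjoint (F F' : {set Arc}) :
  strongly_connected F -> strongly_connected F' ->
  (forall v, #|delta_out [set v] :&: F| = 1) ->
  (forall v, #|delta_out [set v] :&: F'| = 1) ->
  [disjoint F & F'] -> forall v, succ F v != succ F' v.
Proof.
move=> sF sF' oF oF' dFF' v.
have [a aF av] := out_arc sF v; have [b bF' bv] := out_arc sF' v.
rewrite -[v in succ F v]av -[v in succ F' v]bv (succ_arc oF aF) (succ_arc oF' bF').
apply: contraTneq dFF' => ab2.
have ab : a = b by apply/val_inj/injective_projections; rewrite ?av ?bv.
by apply/pred0Pn; exists a; rewrite /= aF ab bF'.
Qed.

Lemma mem_uniq_card (T : finType) (r : seq T) (x : T) :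
  uniq r -> size r = #|T| -> x \in r.
Proof.
move=> ur rT; have [|_ ->] := uniq_min_size ur (fun y _ => mem_enum T y).
  by rewrite -cardT rT.
by rewrite mem_enum.
Qed.

Section CyclicMap.

Variables (T : finType) (s : T -> T).
Hypothesis s_cyclic : cyclic_map s.

Lemma cyclic_map_inj : injective s.
Proof.
move=> x y; have im : s @: [set: T] = [set: T].
  apply: s_cyclic => [|_ /imsetP[u _ ->]]; last by rewrite imset_f.
  by apply/set0Pn; exists (s x); rewrite imset_f.
have /image_injP sinj : #|[seq s u | u in [set: T]]| == #|[set: T]|.
  by rewrite -imset_card im.
by apply: sinj; rewrite inE.
Qed.

Lemma cyclic_map_iter_neq (k : nat) (v : T) : 0 < k < #|T| -> iter k s v != v.
Proof.
case/andP=> k0 kT; apply/eqP => skv.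
have UT : [set iter i s v | i : 'I_k] = [set: T].
  apply: s_cyclic => [|_ /imsetP[i _ ->]].
    by apply/set0Pn; exists v; apply/imsetP; exists (Ordinal k0).
  rewrite -iterS; have [ik | ki] := ltnP i.+1 k; first by apply/imsetP; exists (Ordinal ik).
  have -> : i.+1 = k by apply/eqP; rewrite eqn_leq ki ltn_ord.
  by rewrite skv; apply/imsetP; exists (Ordinal k0).
have := leq_imset_card (fun i : 'I_k => iter i s v) 'I_k.
by rewrite UT cardsT card_ord leqNgt kT.
Qed.

Hypothesis card_T : #|T| = 4.

Lemma cyclic_map_card4_neq (u : T) :
  [/\ u != s u, u != s (s u) & u != s (s (s u))].
Proof.
have neq k : 0 < k < 4 -> u != iter k s u.
  by rewrite eq_sym -card_T; exact: cyclic_map_iter_neq.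
by split; [exact: (neq 1) | exact: (neq 2) | exact: (neq 3)].
Qed.

Lemma cyclic_map_card4_orbit (v : T) :
  uniq [:: v; s v; s (s v); s (s (s v))] /\ s (s (s (s v))) = v.
Proof.
have n1 u : u != s u by case: (cyclic_map_card4_neq u).
have n2 u : u != s (s u) by case: (cyclic_map_card4_neq u).
have n3 u : u != s (s (s u)) by case: (cyclic_map_card4_neq u).
have orbit_uniq : uniq [:: v; s v; s (s v); s (s (s v))].
  by rewrite /= !inE !negb_or !n1 !n2 !n3.
split=> //; have := mem_uniq_card (s (s (s (s v)))) orbit_uniq (esym card_T).
rewrite !inE => /or4P[/eqP // | /eqP e | /eqP e | /eqP e].
- by move: (n3 (s v)); rewrite e eqxx.
- by move: (n2 (s (s v))); rewrite e eqxx.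
- by move: (n1 (s (s (s v)))); rewrite e eqxx.
Qed.

End CyclicMap.

Lemma cyclic_maps_nowhere_equal_inv (T : finType) (s t : T -> T) :
  #|T| = 4 -> cyclic_map s -> cyclic_map t -> (forall v, s v != t v) ->
  cancel s t.
Proof.
move=> card_T s_cyc t_cyc st v.
have [orbit_uniq s4v] := cyclic_map_card4_orbit s_cyc card_T v.
set w := s v in orbit_uniq s4v *; set x := s w in orbit_uniq s4v.
set y := s x in orbit_uniq s4v.
have mem z : z \in [:: v; w; x; y] := mem_uniq_card z orbit_uniq (esym card_T).
have t_inj := cyclic_map_inj t_cyc.
have t1 u : u != t u by case: (cyclic_map_card4_neq t_cyc card_T u).
have t2 u : u != t (t u) by case: (cyclic_map_card4_neq t_cyc card_T u).
(* Along the s-cycle v, w, x, y: if t w <> v then t w = y, which forces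
   t y = x and leaves no admissible value for t v. *)
have := mem (t w); rewrite !inE => /or4P[/eqP // | /eqP twW | /eqP twX | /eqP twY].
- by move: (t1 w); rewrite twW eqxx.
- by move: (st w); rewrite twX eqxx.
have tyX : t y = x.
  have := mem (t y); rewrite !inE => /or4P[/eqP tyV | /eqP tyW | /eqP // | /eqP tyY].
  - by move: (st y); rewrite s4v tyV eqxx.
  - by move: (t2 w); rewrite twY tyW eqxx.
  - by move: (t1 y); rewrite tyY eqxx.
have := mem (t v); rewrite !inE => /or4P[/eqP tvV | /eqP tvW | /eqP tvX | /eqP tvY].
- by move: (t1 v); rewrite tvV eqxx.
- by move: (st v); rewrite tvW eqxx.
- by move: orbit_uniq; rewrite (t_inj _ _ (etrans tvX (esym tyX))) /= !inE eqxx !orbT.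
- by move: orbit_uniq; rewrite (t_inj _ _ (etrans tvY (esym twY))) /= !inE eqxx.
Qed.

Lemma strongly_connected3_out_degree1 (F1 F2 F3 : {set Arc}) :
  [disjoint F1 & F2] -> [disjoint F1 & F3] -> [disjoint F2 & F3] ->
  strongly_connected F1 -> strongly_connected F2 -> strongly_connected F3 ->
  forall v, #|delta_out [set v] :&: F1| = 1.
Proof.
move=> d12 d13 d23 sc1 sc2 sc3 v.
by apply: card_setI_disjoint3 d12 d13 d23 (card_delta_out1 v) _ _ _;
  [apply: sc1 | apply: sc2 | apply: sc3]; apply: proper_nonempty_set1.
Qed.

Lemma no_three_disjoint_strongly_connected (F1 F2 F3 : {set Arc}) :
  [disjoint F1 & F2] -> [disjoint F1 & F3] -> [disjoint F2 & F3] ->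
  strongly_connected F1 -> strongly_connected F2 -> ~ strongly_connected F3.
Proof.
move=> d12 d13 d23 sc1 sc2 sc3.
have d21 : [disjoint F2 & F1] by rewrite disjoint_sym.
have d31 : [disjoint F3 & F1] by rewrite disjoint_sym.
have d32 : [disjoint F3 & F2] by rewrite disjoint_sym.
have o1 := strongly_connected3_out_degree1 d12 d13 d23 sc1 sc2 sc3.
have o2 := strongly_connected3_out_degree1 d21 d23 d13 sc2 sc1 sc3.
have o3 := strongly_connected3_out_degree1 d31 d32 d12 sc3 sc1 sc2.
have card_V : #|V| = 4 by rewrite card_ord.
have inv2 := cyclic_maps_nowhere_equal_inv card_V (succ_cyclic sc1 o1)
  (succ_cyclic sc2 o2) (succ_disjoint sc1 sc2 o1 o2 d12).
have inv3 := cyclic_maps_nowhere_equal_inv card_V (succ_cyclic sc1 o1)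
  (succ_cyclic sc3 o3) (succ_disjoint sc1 sc3 o1 o3 d13).
by have := succ_disjoint sc2 sc3 o2 o3 d23 (succ F1 ord0); rewrite inv2 inv3 eqxx.
Qed.

Theorem mainTheorem16 :
  (forall U : {set V}, proper_nonempty U ->
     (3 <= xsum (fun _ => 1) (delta_out U))%R)
  /\
  ~ (exists F1 F2 F3 : {set Arc},
       [disjoint F1 & F2] /\ [disjoint F1 & F3] /\ [disjoint F2 & F3] /\
       F1 :|: F2 :|: F3 = [set: Arc] /\
       (forall U : {set V}, proper_nonempty U ->
          delta_out U :&: F1 != set0 /\
          delta_out U :&: F2 != set0 /\
          delta_out U :&: F3 != set0)).
Proof.
split=> [|[F1 [F2 [F3 [d12 [d13 [d23 [_ cuts]]]]]]]]; first exact: xsum_ones_delta_out.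
by apply: (no_three_disjoint_strongly_connected d12 d13 d23) => U /cuts[? [? ?]].
Qed.
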